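(* Let $G$ be a primitive permutation group of type PA preserving a product structure $\Delta^I$, and let $H\le\mathrm{Sym}(\Delta)$ be such that $G\le H\wr\mathrm{Sym}(I)$ (in product action). If $G$ contains a quasi-semiregular element, then $H$ contains quasi-semiregular elements (on $\Delta$), and every quasi-semiregular element of prime order in $G$ lies in the base group $H^I$.
   Context: A permutation $g$ is quasi-semiregular if $\langle g\rangle$ has a unique fixed point and acts semiregularly (only the identity fixes a point) on the remaining points. Product action of $H\wr\mathrm{Sym}(I)$ on $\Delta^I$: the base group $H^I$ acts coordinatewise and $\mathrm{Sym}(I)$ permutes coordinates. *)

From mathcomp Require Import all_boot all_fingroup all_solvable.
Set Implicit Arguments. Unset Strict Implicit. Unset Printing Implicit Defensive.
Local Open Scope group_scope.

(* Product action of {perm D} wr {perm I} on {ffun I -> D}: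
   the pair (h, s) sends x to the function i |-> h i (x (s^-1 i)),
   i.e. (delta_i)_i  |->  (delta_{i s^-1} ^ h_{i s^-1}) reindexed;
   the base group acts coordinatewise and s permutes coordinates. *)
Definition prodact (I D : finType) (h : {ffun I -> {perm D}}) (s : {perm I})
    (x : {ffun I -> D}) : {ffun I -> D} :=
  [ffun i => h i (x (s^-1 i))].

Definition wreath_prod (I D : finType) (H : {set {perm D}}) :
    {set {perm {ffun I -> D}}} :=
  [set p : {perm {ffun I -> D}} | [exists h : {ffun I -> {perm D}}, exists s : {perm I},
            [forall i, h i \in H] && [forall x, p x == prodact h s x]]].

Definition base_group (I D : finType) (H : {set {perm D}}) :
    {set {perm {ffun I -> D}}} :=
  [set p : {perm {ffun I -> D}} | [exists h : {ffun I -> {perm D}},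
            [forall i, h i \in H] && [forall x, p x == prodact h 1 x]]].

Definition socle (gT : finGroupType) (G : {set gT}) : {set gT} :=
  <<\bigcup_(N : {group gT} | minnormal N G && (N \subset G)) N>>.

Definition quasi_semiregular (T : finType) (g : {perm T}) : Prop :=
  exists w : T, [set x | g x == x] = [set w] /\
    forall x, x != w -> forall k : nat, (g ^+ k) x = x -> g ^+ k = 1.

Definition primitive_PA (I D : finType) (G : {group {perm {ffun I -> D}}}) :
    Prop :=
  [/\ G \subset wreath_prod I [set: {perm D}],
      [primitive G, on [set: {ffun I -> D}] | 'P],
      1 < #|I| &
      exists T : {group {perm D}},
        [/\ simple T, ~~ abelian T,
            exists d : D, 'C_T[d | 'P] != 1 &
            socle G = base_group I T]].

From mathcomp Require Import all_boot all_fingroup all_solvable.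
Set Implicit Arguments. Unset Strict Implicit. Unset Printing Implicit Defensive.
Local Open Scope group_scope.

(* Write g in H wr Sym(I) as (h, s), let w be its unique fixed point, fix a
   coordinate i and let m be the length of the s-cycle through i.  Then s^m
   fixes i, so g^m maps the fibre {w with the i-th coordinate replaced} to
   itself, acting there as the component c = (g^m)_i in H.  A fixed point of c
   spreads along the s-cycle of i to a fixed point of g, so w_i is the only
   fixed point of c; and c^k e = e with e <> w_i gives a point other than w
   fixed by g^(mk), whence g^(mk) = 1 and c^k = 1.  Thus c is
   quasi-semiregular.  If moreover g has prime order and s moves i, then
   g^m <> 1 (otherwise every point of the fibre would give a fixed point of
   g), so g is a power of g^m; as |D| > 1 the top component of the product
   action is unique, so s is then a power of s^m and fixes i, a contradiction. *)

Lemma periodic_modn (T : Type) (f : nat -> T) m :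
  (forall n, f (m + n) = f n) -> forall n, f n = f (n %% m).
Proof.
move=> fper n; rewrite {1}(divn_eq n m); elim: (n %/ m) => // q IHq.
by rewrite mulSn -addnA fper.
Qed.

Lemma perm_order_fix (T : finType) (s : {perm T}) i :
  (s ^+ fingraph.order s i) i = i.
Proof. by rewrite permX (iter_order (@perm_inj _ s)). Qed.

Section ProductAction.
Variables I D : finType.
Implicit Types (h : {ffun I -> {perm D}}) (s : {perm I}).
Implicit Types (g p : {perm {ffun I -> D}}) (w x y : {ffun I -> D}).

Definition fupd w i (e : D) : {ffun I -> D} :=
  [ffun j => if j == i then e else w j].

Lemma fupd_id w i e : fupd w i e i = e.
Proof. by rewrite ffunE eqxx. Qed.

Lemma fupd_eq w i : fupd w i (w i) = w.
Proof. by apply/ffunP => j; rewrite ffunE; case: eqP => // ->. Qed.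

Lemma prodact_coord p h s x j :
  p =1 prodact h s -> p x (s j) = h (s j) (x j).
Proof. by move=> Hp; rewrite Hp ffunE permK. Qed.

Lemma prodact_expg g h s n :
  g =1 prodact h s -> exists hn, g ^+ n =1 prodact hn (s ^+ n).
Proof.
move=> Hg; elim: n => [|n [hn Hn]].
  exists [ffun=> 1] => x; apply/ffunP => i.
  by rewrite !ffunE !expg0 invg1 !perm1.
exists [ffun i => hn (s^-1 i) * h i] => x; apply/ffunP => i.
by rewrite expgSr permM Hg Hn !ffunE permM expgSr invMg permM.
Qed.

Lemma prodact_top_uniq p h s h' s' :
  1 < #|D| -> p =1 prodact h s -> p =1 prodact h' s' -> s = s'.
Proof.
case/card_gt1P=> [a [b [_ _ ab]]] Hp Hp'; apply: invg_inj; apply/permP => j.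
apply/eqP/negPn/negP => ne.
pose x : {ffun I -> D} := [ffun=> a].
have : p x j != p (fupd x (s^-1 j) b) j.
  by rewrite !Hp !ffunE eqxx (inj_eq perm_inj).
by rewrite !Hp' !ffunE (eq_sym (s'^-1 j)) (negbTE ne) eqxx.
Qed.

Lemma prodact_fupd p h s w i e :
  p =1 prodact h s -> s i = i -> p w = w -> p (fupd w i e) = fupd w i (h i e).
Proof.
move=> Hp si pw; apply/ffunP => j; rewrite Hp !ffunE.
rewrite (can2_eq (permKV s) (permK s)) si.
by case: eqP => [->|_] //; rewrite -[in RHS]pw Hp ffunE.
Qed.

(* The fixed point is built coordinatewise along the s-cycle of i from the
   trajectory of y, and equals w off that cycle. *)
Lemma prodact_fixed_extend g h s w y i :
  g =1 prodact h s -> g w = w -> (g ^+ fingraph.order s i) y i = y i ->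
  exists2 x, g x = x & x i = y i.
Proof.
move=> Hg gw Hy; set m := fingraph.order s i in Hy *.
have smi : (s ^+ m) i = i := perm_order_fix s i.
pose P n := (g ^+ n) y ((s ^+ n) i).
have P_succ n : P n.+1 = h (s ((s ^+ n) i)) (P n).
  by rewrite /P !expgSr !permM (prodact_coord _ _ Hg).
have P_per n : P (m + n) = P n.
  have [hn Hn] := prodact_expg n Hg.
  by rewrite /P !expgD !permM smi !(prodact_coord _ _ Hn) Hy.
have s_per n : (s ^+ n) i = (s ^+ (n %% m)) i.
  apply: (periodic_modn (f := fun n => (s ^+ n) i)) => k.
  by rewrite expgD permM smi.
pose x : {ffun I -> D} :=
  [ffun j => if fconnect s i j then P (findex s i j) else w j].
have xP n : x ((s ^+ n) i) = P n.
  rewrite ffunE permX fconnect_iter -permX s_per permX findex_iter.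
    by rewrite -(periodic_modn P_per).
  by rewrite ltn_pmod // fingraph.order_gt0.
exists x; last by have := xP 0; rewrite /P !expg0 !perm1.
apply/ffunP => j; rewrite -(permKV s j); set j' := s^-1 j.
rewrite (prodact_coord _ _ Hg); case cj': (fconnect s i j').
  have [n ->] : exists n, j' = (s ^+ n) i.
    by exists (findex s i j'); rewrite permX iter_findex.
  by rewrite xP -P_succ -xP expgSr permM.
have cj : fconnect s i (s j') = false.
  by rewrite -(same_fconnect1_r (@perm_inj _ s)).
by rewrite !ffunE cj' cj -(prodact_coord _ _ Hg) gw.
Qed.

Lemma fixed_prodact_return g h s w i e :
  g =1 prodact h s -> [set x | g x == x] = [set w] ->
  (g ^+ fingraph.order s i) (fupd w i e) i = e -> e = w i.
Proof.
move=> Hg Fg ge.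
have gw : g w = w by apply/eqP; have := set11 w; rewrite -Fg inE.
rewrite -{2}(fupd_id w i e) in ge.
have [x gx xi] := prodact_fixed_extend Hg gw ge.
have : x \in [set w] by rewrite -Fg inE gx.
by rewrite fupd_id in xi; rewrite inE => /eqP xw; rewrite -xi xw.
Qed.

Lemma qsr_prodact_component g h s i hm :
  quasi_semiregular g -> g =1 prodact h s ->
  g ^+ fingraph.order s i =1 prodact hm (s ^+ fingraph.order s i) ->
  quasi_semiregular (hm i).
Proof.
case=> w [Fg Sg] Hg Hm; set m := fingraph.order s i in Hm *.
have gw : g w = w by apply/eqP; have := set11 w; rewrite -Fg inE.
have gmw : (g ^+ m) w = w by rewrite permX_fix.
have smi : (s ^+ m) i = i := perm_order_fix s i.
have fibX k e : ((g ^+ m) ^+ k) (fupd w i e) = fupd w i ((hm i ^+ k) e).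
  elim: k e => [|k IHk] e; first by rewrite !expg0 !perm1.
  by rewrite !expgSr !permM IHk (prodact_fupd _ Hm smi gmw).
exists (w i); split.
  apply/setP => e; rewrite !inE; apply/eqP/eqP => [hme | ->].
    apply: (fixed_prodact_return Hg Fg).
    by rewrite (prodact_fupd _ Hm) ?fupd_id.
  have := fibX 1%N (w i); rewrite !expg1 fupd_eq gmw => /ffunP /(_ i).
  by rewrite fupd_id.
move=> e ne k hmk; apply/permP => e'; rewrite perm1.
have yw : fupd w i e != w by apply: contra ne => /eqP <-; rewrite fupd_id.
have gmk : g ^+ (m * k) = 1 by apply: Sg yw _ _; rewrite expgM fibX hmk.
have := fibX k e'; rewrite -expgM gmk perm1 => /ffunP /(_ i).
by rewrite !fupd_id.
Qed.

Lemma qsr_prime_prodact_top g h s :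
  1 < #|D| -> prime #[g] -> quasi_semiregular g -> g =1 prodact h s -> s = 1.
Proof.
move=> D_gt1 pr_g [w [Fg _]] Hg; apply/permP => i; rewrite perm1.
apply/eqP/negPn/negP => si; set m := fingraph.order s i.
have gm_neq1 : g ^+ m != 1.
  apply/eqP => gm1; case/card_gt1P: D_gt1 => a [b [_ _]].
  have fixed_w e : e = w i.
    by apply: (fixed_prodact_return Hg Fg); rewrite gm1 perm1 fupd_id.
  by rewrite (fixed_w a) (fixed_w b) eqxx.
have [k gk] : exists k, g = (g ^+ m) ^+ k.
  have gmG : g ^+ m \in <[g]>^# by rewrite !inE gm_neq1 mem_cycle.
  by apply/cycleP; rewrite -(nt_gen_prime pr_g gmG) cycle_id.
have [hm Hm] := prodact_expg (m * k) Hg.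
have Hgk : g =1 prodact hm (s ^+ (m * k)) by move=> x; rewrite {1}gk -expgM Hm.
move: si; rewrite (prodact_top_uniq D_gt1 Hg Hgk) expgM.
by rewrite permX_fix ?perm_order_fix ?eqxx.
Qed.

Lemma wreath_prodP (H : {set {perm D}}) g :
  g \in wreath_prod I H ->
  exists h s, (forall i, h i \in H) /\ g =1 prodact h s.
Proof.
rewrite inE => /existsP [h /existsP [s /andP [/forallP hH /forallP Hg]]].
by exists h, s; split => // x; apply/eqP.
Qed.

Lemma mem_base_group (H : {set {perm D}}) g h :
  (forall i, h i \in H) -> g =1 prodact h 1 -> g \in base_group I H.
Proof.
move=> hH Hg; rewrite inE; apply/existsP; exists h.
by apply/andP; split; apply/forallP => // x; rewrite Hg.
Qed.

End ProductAction.

Lemma primitive_PA_card_gt1 (I D : finType) (G : {group {perm {ffun I -> D}}}) :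
  primitive_PA G -> 1 < #|D|.
Proof.
case=> _ _ _ [T [_ _ [d /trivgPn [t /setIP [_ _] t1]] _]].
apply/card_gt1P; have [e te] : exists e, t e != e.
  apply/existsP; apply: contraR t1 => /existsPn te.
  by apply/eqP/permP => e; rewrite perm1; apply/eqP/negPn.
by exists (t e), e.
Qed.

Theorem corollary5p3 (I D : finType) (G : {group {perm {ffun I -> D}}})
    (H : {group {perm D}}) :
  primitive_PA G ->
  G \subset wreath_prod I H ->
  (exists2 g, g \in G & quasi_semiregular g) ->
  (exists2 h, h \in H & quasi_semiregular h) /\
  (forall g, g \in G -> prime #[g] -> quasi_semiregular g ->
     g \in base_group I H).
Proof.
move=> PA sGW [g gG qg]; have D_gt1 := primitive_PA_card_gt1 PA.
have wrG := fun p (pG : p \in G) => wreath_prodP (subsetP sGW p pG).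
split=> [|g' g'G pr_g' qg'].
  have [i _] : exists i : I, true.
    by case: PA => _ _ /ltnW /card_gt0P [i _] _; exists i.
  have [h [s [_ Hg]]] := wrG g gG; set m := fingraph.order s i.
  have [hm [sm [hmH Hm]]] := wrG _ (groupX m gG).
  have [hm' Hm'] := prodact_expg m Hg.
  have sm_def := prodact_top_uniq D_gt1 Hm Hm'; rewrite sm_def in Hm.
  by exists (hm i); last exact: qsr_prodact_component qg Hg Hm.
have [h [s [hH Hg']]] := wrG g' g'G.
apply: mem_base_group hH _.
by rewrite -(qsr_prime_prodact_top D_gt1 pr_g' qg' Hg').
Qed.
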